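(* Let $(N,+,* )$ be a nilpotent ring with adjoint operation $x\circ y=x+y+x*y$, let $S$ be a subring and $I$ a two-sided ideal of $N$ with $S\cap I=\{0\}$ and $N=S+I$. Then every $x\in N$ can be written uniquely as $x=s\circ i$ with $s\in S$, $i\in I$; define $x\bullet y=s\circ y\circ i$, so that $(N,+,\bullet)$ is a left brace, and let $r$ be its Yang–Baxter map. Let $X\subseteq N$ be such that $(X,r)$ is a solution of the set-theoretic Yang–Baxter equation. Let $J\subseteq I\cap X$ be a two-sided ideal of the ring $N$. Let $f,g:X\to X$ with $f$ $\mathcal G(X,r)$-equivariant, and let $k_1(x)=f(x)*g(x)$, $k_2(x)=f(x)+f(x)*g(x)$, assuming $k_1(X),k_2(X)\subseteq X$. Suppose that $g(x)*z=z*g(x)$ for all $z\in I$, $x\in X$; that $g(x+j)=g(x)$ whenever $x\in X$, $j\in J$ and $x+j\in X$; and that $k_1(x)-x\in J$ and $k_2(x)-x\in J$ for all $x\in X$. Then $k_1$ and $k_2$ are reflections of $(X,r)$.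
   Context: A (left) brace is a triple $(B,+,\circ)$ with $(B,+)$ abelian group, $(B,\circ)$ group, and $x\circ(y+z)=x\circ y+x\circ z-x$. The Yang–Baxter map of the brace $(N,+,\bullet)$ is $r(x,y)=(\sigma_x(y),\tau_y(x))$ with $\sigma_x(y)=x\bullet y-x$ and $\tau_y(x)=(\sigma_x(y))^{-1}\bullet x-(\sigma_x(y))^{-1}$, inverses taken in $(N,\bullet)$. For $X\subseteq N$, $(X,r)$ is a solution of the set-theoretic Yang–Baxter equation if $r(X\times X)\subseteq X\times X$ and $(\mathrm{id}\times r)(r\times\mathrm{id})(\mathrm{id}\times r)=(r\times\mathrm{id})(\mathrm{id}\times r)(r\times\mathrm{id})$ on $X^3$. A map $k:X\to X$ is a reflection of $(X,r)$ if $r(\mathrm{id}\times k)r(\mathrm{id}\times k)=(\mathrm{id}\times k)r(\mathrm{id}\times k)r$ on $X\times X$; $k$ is $\mathcal G(X,r)$-equivariant if $k\sigma_x=\sigma_x k$ on $X$ for every $x\in X$. *)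

(* (N,+) is a zmodType; the (non-unital) ring multiplication
   is an explicit operation [mul] with its axioms as hypotheses, since
   MathComp rings are unital and a nilpotent ring has no unit. *)
From HB Require Import structures.
From mathcomp Require Import all_boot all_order all_algebra.
From Stdlib Require Import ClassicalEpsilon.
Set Implicit Arguments. Unset Strict Implicit. Unset Printing Implicit Defensive.
Import GRing.Theory.
Local Open Scope ring_scope.

Section Defs.
Variable N : zmodType.
Variable mul : N -> N -> N.

Definition rng_axioms : Prop :=
  (forall x y z, mul (mul x y) z = mul x (mul y z)) /\
  (forall x y z, mul x (y + z) = mul x y + mul x z) /\
  (forall x y z, mul (x + y) z = mul x z + mul y z).

Definition prodl (x : N) (xs : seq N) : N := foldl mul x xs.

(* nilpotent: N^n = 0 for some n >= 1, i.e. all products of n elements vanish *)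
Definition nilpotent_rng : Prop :=
  exists n : nat, (0 < n)%N /\
    forall (x : N) (xs : seq N), size xs = n.-1 -> prodl x xs = 0.

Definition adj (x y : N) : N := x + y + mul x y.

Definition is_subring (S : N -> Prop) : Prop :=
  S 0 /\ (forall x y, S x -> S y -> S (x - y)) /\
  (forall x y, S x -> S y -> S (mul x y)).

Definition is_ideal (I : N -> Prop) : Prop :=
  I 0 /\ (forall x y, I x -> I y -> I (x - y)) /\
  (forall x i, I i -> I (mul x i) /\ I (mul i x)).

Variables S I : N -> Prop.

Definition decomp_spec (x : N) (p : N * N) : Prop :=
  S p.1 /\ I p.2 /\ x = adj p.1 p.2.

(* the (unique, under the hypotheses of the theorem) decomposition x = s o i *)
Definition decomp (x : N) : N * N :=
  epsilon (inhabits (0, 0)) (decomp_spec x).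

Definition bullet (x y : N) : N := adj (adj (decomp x).1 y) (decomp x).2.

Definition binv (x : N) : N :=
  epsilon (inhabits 0) (fun y => bullet x y = 0 /\ bullet y x = 0).

Definition sigma (x y : N) : N := bullet x y - x.
Definition tau (y x : N) : N := bullet (binv (sigma x y)) x - binv (sigma x y).

Definition ybr (x y : N) : N * N := (sigma x y, tau y x).

End Defs.

Definition is_left_brace (N : zmodType) (op : N -> N -> N) : Prop :=
  (exists e : N,
     (forall x, op e x = x /\ op x e = x) /\
     (forall x, exists y, op x y = e /\ op y x = e)) /\
  (forall x y z, op (op x y) z = op x (op y z)) /\
  (forall x y z, op x (y + z) = op x y + op x z - x).

Section YBE.
Variable T : Type.
Variable r : T -> T -> T * T.

Definition r12 (t : T * T * T) : T * T * T :=
  let: (a, b, c) := t in let: (a', b') := r a b in (a', b', c).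
Definition r23 (t : T * T * T) : T * T * T :=
  let: (a, b, c) := t in let: (b', c') := r b c in (a, b', c').

Definition is_solution (X : T -> Prop) : Prop :=
  (forall x y, X x -> X y -> X (r x y).1 /\ X (r x y).2) /\
  (forall x y z, X x -> X y -> X z ->
     r23 (r12 (r23 (x, y, z))) = r12 (r23 (r12 (x, y, z)))).

Definition idk (k : T -> T) (p : T * T) : T * T := (p.1, k p.2).
Definition ru (p : T * T) : T * T := r p.1 p.2.

Definition is_reflection (X : T -> Prop) (k : T -> T) : Prop :=
  forall x y, X x -> X y ->
    ru (idk k (ru (idk k (x, y)))) = idk k (ru (idk k (ru (x, y)))).
End YBE.

Definition equivariant (T : Type) (X : T -> Prop) (sig : T -> T -> T)
  (k : T -> T) : Prop :=
  forall x y, X x -> X y -> k (sig x y) = sig x (k y).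

From Pilot Require Import Defs.
From mathcomp Require Import all_boot all_order all_algebra.
From Stdlib Require Import ClassicalEpsilon.
Import GRing.Theory.
Local Open Scope ring_scope.
Set Implicit Arguments. Unset Strict Implicit.

(** The shift hypotheses give [f x = k2 x - k1 x] in the ideal [J], hence
   [x = k1 x - (k1 x - x)] in [J]: so [X = J] lies in [I]. For [x] in [I] the decomposition
   is [x = 0 o x], so [x • y = y o x] and [r(x, y) = (u, x(1+u)^-1)] with
   [u = y(1+x)]. A direct computation then shows that every map commuting with
   the right translations [z |-> z(1+x)], [x] in [X], is a reflection. The maps
   [k1] and [k2] commute with them: [f] by equivariance, [g] is constant along
   them because [z x] lies in [J], and [g y] commutes with [x] in [I]. *)

Section AddAC.
Variable V : zmodType.
Implicit Types a b e t L M R : V.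

Lemma addr_pull a b e t : a = e + t -> a + b = e + b + t.
Proof. by move=> ->; rewrite addrAC. Qed.

Lemma addr_match L M R t : L = M + t -> M = R -> L = R + t.
Proof. by move=> -> ->. Qed.

Lemma addr_match_last L M t : L = M + t -> M = 0 -> L = t.
Proof. by move=> -> ->; rewrite add0r. Qed.
End AddAC.

(* Proves an equation between sums in an abelian group by extracting each
   summand of the right-hand side from the left-hand side, one at a time. *)
Ltac pull_summand :=
  first [ reflexivity | eapply addr_pull; pull_summand | symmetry; exact: add0r ].
Ltac match_sums :=
  match goal with
  | |- ?L = ?R + ?t => eapply (@addr_match _ L _ R t); [pull_summand | match_sums]
  | |- _ = 0 => rewrite ?add0r ?addr0 //
  | |- ?L = ?t => eapply (@addr_match_last _ L _ t); [pull_summand | rewrite ?add0r ?addr0 //]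
  end.
Ltac sum_ac := rewrite ?addrA; match_sums.

Section Rng.
Variables (N : zmodType) (mul : N -> N -> N).
Hypothesis rng_mul : rng_axioms mul.

Lemma mulA x y z : mul (mul x y) z = mul x (mul y z).
Proof. by case: rng_mul. Qed.

Lemma mulDr x y z : mul x (y + z) = mul x y + mul x z.
Proof. by case: rng_mul => _ []. Qed.

Lemma mulDl x y z : mul (x + y) z = mul x z + mul y z.
Proof. by case: rng_mul => _ []. Qed.

Lemma mulx0 x : mul x 0 = 0.
Proof. by apply: (addrI (mul x 0)); rewrite -mulDr !addr0. Qed.

Lemma mul0x x : mul 0 x = 0.
Proof. by apply: (addrI (mul 0 x)); rewrite -mulDl !addr0. Qed.

Lemma mulxN x y : mul x (- y) = - mul x y.
Proof. by apply/eqP; rewrite -addr_eq0 -mulDr addNr mulx0. Qed.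

Lemma mulNx x y : mul (- x) y = - mul x y.
Proof. by apply/eqP; rewrite -addr_eq0 -mulDl addNr mul0x. Qed.

Lemma mulxB x y z : mul x (y - z) = mul x y - mul x z.
Proof. by rewrite mulDr mulxN. Qed.

Lemma mulBx x y z : mul (x - y) z = mul x z - mul y z.
Proof. by rewrite mulDl mulNx. Qed.

Local Notation adj := (adj mul).

Lemma adjA x y z : adj (adj x y) z = adj x (adj y z).
Proof. rewrite /Defs.adj !mulDl !mulDr mulA; sum_ac. Qed.

Lemma adj0x x : adj 0 x = x.
Proof. by rewrite /Defs.adj mul0x add0r addr0. Qed.

Lemma adjx0 x : adj x 0 = x.
Proof. by rewrite /Defs.adj mulx0 !addr0. Qed.

Lemma adj_adj_split s i w :
  adj (adj s w) i = adj s i + (w + mul s w + mul w i + mul (mul s w) i).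
Proof. rewrite /Defs.adj !mulDl; sum_ac. Qed.

(* [ract w z] is [z (1 + w)] in the unitization of [N]. *)
Definition ract (w z : N) : N := z + mul z w.

Lemma ract_adj v w z : ract w (ract v z) = ract (adj v w) z.
Proof. rewrite /ract /Defs.adj !mulDl !mulDr mulA; sum_ac. Qed.

Lemma ract0 z : ract 0 z = z.
Proof. by rewrite /ract mulx0 addr0. Qed.

Lemma ractD w a b : ract w (a + b) = ract w a + ract w b.
Proof. rewrite /ract mulDl; sum_ac. Qed.

Lemma ract_mulC w a b : mul b w = mul w b -> mul (ract w a) b = ract w (mul a b).
Proof. by move=> bw; rewrite /ract mulDl !mulA bw. Qed.

(* The partial sums of [- x + x^2 - x^3 + ...]. *)
Fixpoint qinv_iter (x : N) (k : nat) : N :=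
  if k is k'.+1 then - x - mul x (qinv_iter x k') else 0.

Lemma qinv_iter_comm x k : mul x (qinv_iter x k) = mul (qinv_iter x k) x.
Proof.
elim: k => [|k IHk] /=; first by rewrite mulx0 mul0x.
by rewrite mulxB mulBx mulxN mulNx mulA IHk.
Qed.

Lemma foldl_mulA y a s : foldl mul (mul y a) s = mul y (foldl mul a s).
Proof. by elim: s a => [|b s IHs] a //=; rewrite mulA IHs. Qed.

Lemma prodl_nseqS y k : prodl mul y (nseq k.+1 y) = mul y (prodl mul y (nseq k y)).
Proof. exact: foldl_mulA. Qed.

Lemma qinv_iterS_sub x k :
  qinv_iter x k.+1 - qinv_iter x k = prodl mul (- x) (nseq k (- x)).
Proof.
elim: k => [|k IHk]; first by rewrite /= mulx0 !subr0.
rewrite prodl_nseqS -IHk.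
change ((- x - mul x (qinv_iter x k.+1)) - (- x - mul x (qinv_iter x k))
  = mul (- x) (qinv_iter x k.+1 - qinv_iter x k)).
move: (qinv_iter x k.+1) (qinv_iter x k) => a b.
by rewrite opprD !opprK addrACA addNr add0r mulNx mulxB opprB addrC.
Qed.

Section Subring.
Variable P : N -> Prop.
Hypothesis P_subring : is_subring mul P.

Lemma subring0 : P 0.
Proof. by case: P_subring. Qed.

Lemma subringB a b : P a -> P b -> P (a - b).
Proof. by case: P_subring => _ [+ _]; apply. Qed.

Lemma subringM a b : P a -> P b -> P (mul a b).
Proof. by case: P_subring => _ [_]; apply. Qed.

Lemma subringN a : P a -> P (- a).
Proof. by move=> Pa; rewrite -sub0r; apply: subringB => //; apply: subring0. Qed.

Lemma subringD a b : P a -> P b -> P (a + b).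
Proof. by move=> Pa Pb; rewrite -(opprK b); apply/subringB/subringN. Qed.

Lemma subring_adj a b : P a -> P b -> P (adj a b).
Proof. by move=> Pa Pb; apply/subringD/subringM => //; apply: subringD. Qed.

Lemma subring_qinv_iter a k : P a -> P (qinv_iter a k).
Proof.
move=> Pa; elim: k => [|k IHk] /=; first exact: subring0.
by apply/subringB/subringM => //; apply: subringN.
Qed.
End Subring.

Section Ideal.
Variable P : N -> Prop.
Hypothesis P_ideal : is_ideal mul P.

Lemma ideal_subring : is_subring mul P.
Proof. by case: P_ideal => P0 [PB PM]; do 2!split=> //; move=> a b _ /(PM a) []. Qed.

Lemma idealMl z i : P i -> P (mul z i).
Proof. by case: P_ideal => _ [_ PM] /(PM z) []. Qed.

Lemma idealMr z i : P i -> P (mul i z).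
Proof. by case: P_ideal => _ [_ PM] /(PM z) []. Qed.

Lemma ideal_ract w z : P z -> P (ract w z).
Proof. by move=> Pz; apply: (subringD ideal_subring) => //; apply: idealMr. Qed.

Lemma ideal_mem_of_shifts a b x : P (mul a b - x) -> P (a + mul a b - x) -> P x.
Proof.
move=> Pabx Paabx; have PS := ideal_subring.
have Pa : P a.
  have -> : a = (a + mul a b - x) - (mul a b - x) by rewrite opprB addrA addrNK addrK.
  exact: subringB.
have -> : x = mul a b - (mul a b - x) by rewrite opprB addrC addrNK.
by apply: subringB => //; apply: idealMr.
Qed.
End Ideal.

Section Nilpotent.
Variable n : nat.
Hypothesis mul_nil : forall (x : N) (xs : seq N), size xs = n.-1 -> prodl mul x xs = 0.

(* The quasi-inverse of [x], i.e. [(1 + x)^-1 - 1]. *)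
Definition qinv x := qinv_iter x n.-1.

Lemma qinv_fix x : qinv x = - x - mul x (qinv x).
Proof.
have /eqP := qinv_iterS_sub x n.-1.
by rewrite mul_nil ?size_nseq // subr_eq0 /qinv => /eqP {1}<-.
Qed.

Lemma adjxV x : adj x (qinv x) = 0.
Proof. by rewrite /Defs.adj {1}qinv_fix addrA addrN add0r addNr. Qed.

Lemma adjVx x : adj (qinv x) x = 0.
Proof. by rewrite /Defs.adj -qinv_iter_comm (addrC (qinv x)); apply: adjxV. Qed.

Lemma adjKx a b : adj (qinv a) (adj a b) = b.
Proof. by rewrite -adjA adjVx adj0x. Qed.

Lemma subring_qinv P a : is_subring mul P -> P a -> P (qinv a).
Proof. by move=> P_subring; apply: subring_qinv_iter. Qed.

Lemma ractVK a z : ract a (ract (qinv a) z) = z.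
Proof. by rewrite ract_adj adjVx ract0. Qed.

Section Brace.
Variables S I : N -> Prop.
Hypotheses (S_subring : is_subring mul S) (I_ideal : is_ideal mul I).
Hypothesis SI0 : forall x, S x -> I x -> x = 0.
Hypothesis SI_sum : forall x, exists s i, S s /\ I i /\ x = s + i.

Local Notation decomp := (decomp mul S I).
Local Notation bullet := (bullet mul S I).
Local Notation binv := (binv mul S I).
Local Notation sigma := (sigma mul S I).
Local Notation ybr := (ybr mul S I).

Let I_subring := ideal_subring I_ideal.

(* [s + i = s o (i + s^-1 i)], writing [s^-1] for the quasi-inverse. *)
Lemma decomp_exists x : exists p, decomp_spec mul S I x p.
Proof.
have [s [i [Ss [Ii ->]]]] := SI_sum x.
exists (s, i + mul (qinv s) i); split=> //=; split.
  by apply: (subringD I_subring) => //; apply: idealMl.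
have si0 : mul (adj s (qinv s)) i = 0 by rewrite adjxV mul0x.
rewrite /Defs.adj !mulDl in si0; rewrite /Defs.adj !mulDr -mulA.
rewrite -[LHS]addr0 -{1}si0; sum_ac.
Qed.

(* [s o i = s' o i'] gives [s'^-1 o s = i' o i^-1] in [S] and [I]. *)
Lemma decomp_unique x p q :
  decomp_spec mul S I x p -> decomp_spec mul S I x q -> p = q.
Proof.
case: p q => s i [s' i'] [/= Ss [Ii ->]] [/= Ss' [Ii' si]].
have si_eq : adj (qinv s') s = adj i' (qinv i).
  by rewrite -[s]adjx0 -(adjxV i) -(adjA s) si adjA adjKx.
have s'Vs0 : adj (qinv s') s = 0.
  apply: SI0; first by apply: subring_adj => //; apply: subring_qinv.
  by rewrite si_eq; apply: subring_adj => //; apply: subring_qinv.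
have s_eq : s = s' by rewrite -(adj0x s) -(adjxV s') adjA s'Vs0 adjx0.
by subst s'; rewrite -(adjKx s i) si adjKx.
Qed.

Lemma decomp_specP x : decomp_spec mul S I x (decomp x).
Proof. by rewrite /Defs.decomp; apply: epsilon_spec; apply: decomp_exists. Qed.

Lemma decompE x p : decomp_spec mul S I x p -> decomp x = p.
Proof. by move/(decomp_unique (decomp_specP x)). Qed.

Lemma bulletE x s i y : S s -> I i -> x = adj s i -> bullet x y = adj (adj s y) i.
Proof. by move=> Ss Ii xE; rewrite /Defs.bullet (@decompE x (s, i)). Qed.

Lemma bulletI u y : I u -> bullet u y = adj y u.
Proof. by move=> Iu; rewrite (@bulletE u 0 u) ?adj0x //; apply: subring0. Qed.

Lemma bulletx0 x : bullet x 0 = x.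
Proof. by have [Ss [Ii xE]] := decomp_specP x; rewrite (bulletE _ Ss Ii xE) adjx0. Qed.

Lemma bullet0x x : bullet 0 x = x.
Proof. by rewrite bulletI ?adjx0 //; apply: subring0. Qed.

Lemma bulletA x y z : bullet (bullet x y) z = bullet x (bullet y z).
Proof.
have [Ss [Ii xE]] := decomp_specP x; have [Ss' [Ii' yE]] := decomp_specP y.
have xyE : bullet x y = adj (adj (decomp x).1 (decomp y).1)
                            (adj (decomp y).2 (decomp x).2).
  by rewrite (bulletE _ Ss Ii xE) {1}yE !adjA.
rewrite (bulletE _ (subring_adj S_subring Ss Ss') (subring_adj I_subring Ii' Ii) xyE).
by rewrite (bulletE _ Ss' Ii' yE) (bulletE _ Ss Ii xE) !adjA.
Qed.

Lemma bulletDr x y z : bullet x (y + z) = bullet x y + bullet x z - x.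
Proof.
have [Ss [Ii xE]] := decomp_specP x.
apply: (addIr x); rewrite subrK !(bulletE _ Ss Ii xE) !adj_adj_split -xE.
rewrite !mulDr !mulDl ?mulDr; sum_ac.
Qed.

(* [x = s o i] has the inverse [s^-1 o i^-1]. *)
Lemma bullet_inv x : exists y, bullet x y = 0 /\ bullet y x = 0.
Proof.
have [Ss [Ii xE]] := decomp_specP x.
set s := (decomp x).1 in Ss xE *; set i := (decomp x).2 in Ii xE *.
have SVs : S (qinv s) by apply: subring_qinv.
have IVi : I (qinv i) by apply: subring_qinv.
exists (adj (qinv s) (qinv i)); split.
  by rewrite (bulletE _ Ss Ii xE) -adjA adjxV adj0x adjVx.
by rewrite (bulletE _ SVs IVi (erefl _)) xE adjKx adjxV.
Qed.

Lemma brace : is_left_brace bullet.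
Proof.
split; last by split; [apply: bulletA | apply: bulletDr].
exists 0; split; last exact: bullet_inv.
by move=> x; rewrite bullet0x bulletx0.
Qed.

Lemma binvI u : I u -> binv u = qinv u.
Proof.
move=> Iu; have IVu : I (qinv u) by apply: subring_qinv.
have [_ binvK] : bullet u (binv u) = 0 /\ bullet (binv u) u = 0.
  apply: (epsilon_spec _ (fun y => bullet u y = 0 /\ bullet y u = 0)).
  by exists (qinv u); rewrite !bulletI // adjVx adjxV.
by rewrite -(bulletx0 (binv u)) -(adjVx u) -bulletI // -bulletA binvK bullet0x.
Qed.

Lemma sigmaI x y : I x -> sigma x y = ract x y.
Proof. by move=> Ix; rewrite /Defs.sigma bulletI // /Defs.adj addrAC addrK. Qed.

Lemma ybrI x y : I x -> I y -> ybr x y = (ract x y, ract (qinv (ract x y)) x).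
Proof.
move=> Ix Iy; rewrite /Defs.ybr /tau sigmaI //.
have Iu : I (ract x y) by apply: ideal_ract.
rewrite binvI // bulletI; last exact: subring_qinv.
by rewrite /Defs.adj addrAC addrK.
Qed.

Lemma ract_equivariant_reflection (X : N -> Prop) (k : N -> N) :
  (forall x, X x -> I x) ->
  (forall x y, X x -> X y -> X (ract x y)) -> (forall x, X x -> X (qinv x)) ->
  (forall x, X x -> X (k x)) ->
  (forall x y, X x -> X y -> k (ract x y) = ract x (k y)) ->
  is_reflection ybr X k.
Proof.
move=> XI Xract Xqinv Xk kE x y Xx Xy; rewrite /ru /idk; cbn [fst snd].
rewrite (ybrI (XI _ Xx) (XI _ (Xk _ Xy))); cbn [fst snd]; set a := ract x (k y).
have Xa : X a by apply/Xract/Xk.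
rewrite (kE _ _ (Xqinv _ Xa) Xx) (ybrI (XI _ Xa) (XI _ (Xract _ _ (Xqinv _ Xa) (Xk _ Xx)))).
rewrite (ybrI (XI _ Xx) (XI _ Xy)); cbn [fst snd]; set c := ract x y.
have Xc : X c by apply: Xract.
rewrite (kE _ _ (Xqinv _ Xc) Xx) (ybrI (XI _ Xc) (XI _ (Xract _ _ (Xqinv _ Xc) (Xk _ Xx)))).
rewrite !ractVK; cbn [fst snd].
by rewrite (kE _ _ (Xqinv _ (Xk _ Xx)) Xc) /c (kE _ _ Xx Xy).
Qed.
End Brace.
End Nilpotent.
End Rng.

Theorem mainTheorem8 (N : zmodType) (mul : N -> N -> N)
  (S I X J : N -> Prop) (f g : N -> N) :
  rng_axioms mul -> nilpotent_rng mul ->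
  is_subring mul S -> is_ideal mul I ->
  (forall x, S x -> I x -> x = 0) ->
  (forall x, exists s i, S s /\ I i /\ x = s + i) ->
  is_solution (ybr mul S I) X ->
  is_ideal mul J -> (forall j, J j -> I j /\ X j) ->
  (forall x, X x -> X (f x)) -> (forall x, X x -> X (g x)) ->
  equivariant X (sigma mul S I) f ->
  (forall x, X x -> X (mul (f x) (g x))) ->
  (forall x, X x -> X (f x + mul (f x) (g x))) ->
  (forall x z, X x -> I z -> mul (g x) z = mul z (g x)) ->
  (forall x j, X x -> J j -> X (x + j) -> g (x + j) = g x) ->
  (forall x, X x -> J (mul (f x) (g x) - x)) ->
  (forall x, X x -> J (f x + mul (f x) (g x) - x)) ->
  (forall x, exists! p, decomp_spec mul S I x p) /\
  is_left_brace (bullet mul S I) /\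
  is_reflection (ybr mul S I) X (fun x => mul (f x) (g x)) /\
  is_reflection (ybr mul S I) X (fun x => f x + mul (f x) (g x)).
Proof.
move=> Hmul [n [_ Hnil]] HS HI SI0 SI_sum _ HJ JIX _ _ f_eq Xk1 Xk2 g_comm g_inv Jk1 Jk2.
have XJ x : X x <-> J x.
  by split=> [Xx | /JIX[] //]; apply: (ideal_mem_of_shifts HJ (Jk1 x Xx) (Jk2 x Xx)).
have XI x : X x -> I x by move/XJ/JIX => [].
have Xract x y : X x -> X y -> X (ract mul x y) by move=> _ /XJ Jy; apply/XJ/(ideal_ract HJ).
have Xqinv x : X x -> X (qinv mul n x).
  by move/XJ=> Jx; apply/XJ/(subring_qinv _ (ideal_subring HJ)).
have f_ract x y : X x -> X y -> f (ract mul x y) = ract mul x (f y).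
  by move=> Xx Xy; rewrite -!(sigmaI Hmul Hnil HS HI SI0 SI_sum _ (XI x Xx)) f_eq.
have g_ract x y : X x -> X y -> g (ract mul x y) = g y.
  by move=> Xx Xy; rewrite g_inv //; [apply/(idealMr HJ)/XJ | apply: Xract].
have k1_ract x y : X x -> X y ->
    mul (f (ract mul x y)) (g (ract mul x y)) = ract mul x (mul (f y) (g y)).
  by move=> Xx Xy; rewrite f_ract ?g_ract // (ract_mulC Hmul) // g_comm //; apply: XI.
have reflection := ract_equivariant_reflection Hmul Hnil HS HI SI0 SI_sum XI Xract Xqinv.
split.
  move=> x; have [p Pp] := decomp_exists Hmul Hnil HI SI_sum x.
  by exists p; split=> // q; apply: (decomp_unique Hmul Hnil HS HI SI0 Pp).
split; first exact: (brace Hmul Hnil HS HI SI0 SI_sum).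
split; apply: reflection => // x y Xx Xy.
by rewrite k1_ract // f_ract // ractD.
Qed.
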